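(* Let $k\ge2$ and $f\ge1$ be integers, let $p,\omega\in(0,1)$, and let $F$ be a $k$-partite $k$-graph with $f$ vertices. There exist $\mu_0>0$ and $n_0$ such that for all $\mu\in(0,\mu_0]$ and $n\ge n_0$ the following holds: if $H$ is a $(p,\mu)$-dense $k$-partite $k$-graph each of whose parts has exactly $n$ vertices, then $H$ contains an $F$-tiling covering all but at most $\omega n$ vertices in each part of $H$.
   Context: A $k$-partite $k$-graph $H$ is a $k$-graph with a fixed partition $V(H)=V_1\cup\dots\cup V_k$ (its parts) such that every edge meets each $V_i$ in at most one vertex. $H$ (with $N=|V(H)|$ vertices) is $(p,\mu)$-dense if for all $X_i\subseteq V_i$, $e_H(X_1,\dots,X_k)\ge p|X_1|\cdots|X_k|-\mu N^k$, where $e_H(X_1,\dots,X_k)$ is the number of $(x_1,\dots,x_k)\in X_1\times\dots\times X_k$ with $\{x_1,\dots,x_k\}\in E(H)$. An $F$-tiling in $H$ is a set of pairwise vertex-disjoint subgraphs of $H$, each isomorphic to $F$. *)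

From HB Require Import structures.
From mathcomp Require Import all_boot all_order all_algebra.
From mathcomp Require Import reals.
Set Implicit Arguments. Unset Strict Implicit. Unset Printing Implicit Defensive.
Import Order.TTheory GRing.Theory Num.Theory.

Definition kpartite_kgraph (k : nat) (V : finType) (part : V -> 'I_k)
  (E : {set {set V}}) : Prop :=
  forall e, e \in E -> #|e| = k /\ forall i : 'I_k, #|[set v in e | part v == i]| <= 1.

(* Host graphs with k parts each of exactly n vertices: vertex set 'I_k * 'I_n,
   the part of (i, x) being i. *)
Definition hvert (k n : nat) := ('I_k * 'I_n)%type.

Definition e_H (k n : nat) (E : {set {set hvert k n}}) (X : 'I_k -> {set 'I_n}) : nat :=
  #|[set t : {ffun 'I_k -> 'I_n} |
      [forall i, t i \in X i] && ([set (i, t i) | i : 'I_k] \in E)]|.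

(* (p, mu)-dense, with N = |V(H)| = k n. *)
Definition dense (R : realType) (k n : nat) (p mu : R) (E : {set {set hvert k n}}) : Prop :=
  forall X : 'I_k -> {set 'I_n},
    (p * (\prod_(i < k) (#|X i|)%:R) - mu * ((k * n)%:R) ^+ k <= (e_H E X)%:R)%R.

Definition is_F_tiling (k n : nat) (VF : finType) (EF : {set {set VF}})
  (E : {set {set hvert k n}}) (m : nat) (phi : 'I_m -> VF -> hvert k n) : Prop :=
  (forall j, injective (phi j)) /\
  (forall j, forall e, e \in EF -> phi j @: e \in E) /\
  (forall j j', j != j' -> [disjoint codom (phi j) & codom (phi j')]).

Definition tiling_cover (k n : nat) (VF : finType) (m : nat)
  (phi : 'I_m -> VF -> hvert k n) : {set hvert k n} :=
  \bigcup_(j < m) [set phi j x | x : VF].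

(* Greedy tiling.  While every part still has s > omega n uncovered vertices,
   (p, mu)-density with mu small gives the uncovered sets at least
   (p omega^k / 2) n^k transversal edges.  By Erdos's theorem on complete
   k-partite k-graphs these edges contain a box Y_0 x ... x Y_(k-1) with
   |Y_i| = |V(F)| all of whose transversals are edges.  Erdos's theorem comes by
   induction on k from a Kovari-Sos-Turan count: by the power-mean inequality
   some injective u : V(F) -> [n] has a large common neighbourhood, once the
   few non-injective maps are discarded.  The k cyclic shifts of F into the box
   (vertex v goes to part partF v + b) are disjoint copies of F using exactly
   the box, so each part loses exactly |V(F)| uncovered vertices and the parts
   stay balanced until at most omega n uncovered vertices remain in each. *)

From HB Require Import structures.
From mathcomp Require Import all_boot all_order all_algebra.
From mathcomp Require Import reals.
From mathcomp Require Import zify lra.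
Set Implicit Arguments. Unset Strict Implicit. Unset Printing Implicit Defensive.
Import Order.TTheory GRing.Theory Num.Theory.

Lemma leq_expn2r (a b f : nat) : a <= b -> a ^ f <= b ^ f.
Proof. by move=> le_ab; elim: f => // f IH; rewrite !expnS leq_mul. Qed.

Lemma leq_cross_expn (a b f : nat) : a * b ^ f + b * a ^ f <= a ^ f.+1 + b ^ f.+1.
Proof.
wlog le_ab : a b / a <= b.
  move=> H; case: (leqP a b) => [|/ltnW]; first exact: H.
  by move/H; rewrite addnC [X in _ <= X]addnC.
have := leq_expn2r f le_ab; rewrite !expnS; nia.
Qed.

Lemma chebyshev_sum_expn (T : finType) (d : T -> nat) f :
  (\sum_t d t) * (\sum_t d t ^ f) <= #|T| * \sum_t d t ^ f.+1.
Proof.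
have lhsE : \sum_s \sum_t (d s * d t ^ f + d t * d s ^ f)
    = 2 * ((\sum_t d t) * (\sum_t d t ^ f)).
  rewrite mul2n -addnn; under eq_bigr do rewrite big_split.
  rewrite big_split /=; congr (_ + _); [|rewrite exchange_big]; rewrite big_distrl;
    by apply: eq_bigr => s _; rewrite big_distrr.
have rhsE : \sum_s \sum_t (d s ^ f.+1 + d t ^ f.+1) = 2 * (#|T| * \sum_t d t ^ f.+1).
  rewrite mul2n -addnn; under eq_bigr do rewrite big_split.
  rewrite big_split /=; congr (_ + _); [|rewrite exchange_big]; rewrite big_distrr;
    by apply: eq_bigr => s _; rewrite sum_nat_const.
rewrite -(leq_pmul2l (isT : 0 < 2)) -lhsE -rhsE.
by apply: leq_sum => s _; apply: leq_sum => t _; apply: leq_cross_expn.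
Qed.

Lemma power_mean_sum (T : finType) (d : T -> nat) f :
  (\sum_t d t) ^ f * #|T| <= #|T| ^ f * \sum_t d t ^ f.
Proof.
elim: f => [|f IH].
  by rewrite !expn0 !mul1n; under eq_bigr do rewrite expn0; rewrite sum1_card.
rewrite expnS -mulnA (leq_trans (leq_mul (leqnn _) IH)) //.
by rewrite mulnCA expnS [#|T| * _]mulnC -mulnA leq_mul2l chebyshev_sum_expn orbT.
Qed.

Lemma expnS_leq_ffact n f : n ^ f.+1 <= n * n ^_ f + f * f * n ^ f.
Proof.
elim: f => [|f IH]; first by rewrite ffactn0 !muln1 expn1 mul0n addn0.
have ffact_le : n ^_ f <= n ^ f.
  by elim: (f) => // g IHg; rewrite ffactnSr expnS mulnC leq_mul // leq_subr.
rewrite ffactnSr (expnS n f.+1) (expnS n f) in IH *.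
have : n <= (n - f) + f by lia.
move: (n - f) (n ^_ f) (n ^ f) IH ffact_le => c a b IH ab ncf.
have : n * a * n <= n * a * (c + f) by rewrite leq_mul2l ncf orbT.
have : n * a * f <= n * b * f by rewrite leq_mul2r leq_mul2l ab !orbT.
have := leq_mul (leqnn n) IH.
nia.
Qed.

Lemma card_set_sum_nat (T : finType) (P : pred T) : #|[set t | P t]| = \sum_t P t.
Proof. by rewrite -sum1dep_card big_mkcond; apply: eq_bigr => t _; case: (P t). Qed.

Lemma card_noninjective_ffun (VF : finType) n :
  n * #|[set u : {ffun VF -> 'I_n} | ~~ injectiveb u]| <= #|VF| * #|VF| * n ^ #|VF|.
Proof.
have := cardC [set u : {ffun VF -> 'I_n} | injectiveb u].
rewrite card_inj_ffuns card_ffun !card_ord => /(canRL (addKn _)) noninjE.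
have -> : #|[set u : {ffun VF -> 'I_n} | ~~ injectiveb u]| = n ^ #|VF| - n ^_ #|VF|.
  by rewrite -noninjE; apply: eq_card => u; rewrite !inE.
have := expnS_leq_ffact n #|VF|; rewrite expnS mulnBr; lia.
Qed.

Section CommonNeighbourhood.

Variables (VF T : finType) (n : nat) (r : 'I_n -> T -> bool).

Definition common_nbhd (u : VF -> 'I_n) : {set T} := [set t | [forall v, r (u v) t]].

Local Notation deg t := #|[set x | r x t]|.
Local Notation f := #|VF|.

Lemma sum_card_common_nbhd :
  \sum_(u : {ffun VF -> 'I_n}) #|common_nbhd u| = \sum_t deg t ^ f.
Proof.
rewrite /common_nbhd; under [LHS]eq_bigr do rewrite card_set_sum_nat.
rewrite exchange_big /=; apply: eq_bigr => t _.
rewrite -card_set_sum_nat -card_ffun_on; apply: eq_card => u; rewrite inE.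
by apply/forallP/ffun_onP => h v; move: (h v); rewrite ?inE.
Qed.

Lemma sum_card_common_nbhd_lower D :
  n * #|T| <= (\sum_t deg t) * D ->
  n ^ f * #|T| <= (\sum_(u : {ffun VF -> 'I_n}) #|common_nbhd u|) * D ^ f.
Proof.
move=> /(leq_expn2r f); rewrite !expnMn sum_card_common_nbhd => degs.
have [->|T_gt0] := posnP #|T|; first by rewrite muln0.
have Tf_gt0 : 0 < #|T| ^ f by rewrite expn_gt0 T_gt0.
rewrite -(leq_pmul2l Tf_gt0) [X in _ <= X]mulnCA mulnA [#|T| ^ f * _]mulnC.
apply: leq_trans (leq_mul degs (leqnn _)) _.
by rewrite mulnAC mulnCA mulnA leq_mul2r power_mean_sum orbT.
Qed.

Lemma sum_card_common_nbhd_upper : f <= n ->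
  exists2 u : {ffun VF -> 'I_n}, injective u &
    \sum_(u' : {ffun VF -> 'I_n}) #|common_nbhd u'|
      <= n ^ f * #|common_nbhd u|
         + #|[set u' : {ffun VF -> 'I_n} | ~~ injectiveb u']| * #|T|.
Proof.
move=> le_fn.
pose u0 : {ffun VF -> 'I_n} := [ffun v => widen_ord le_fn (enum_rank v)].
have u0_inj : injectiveb u0.
  apply/injectiveP => x y; rewrite !ffunE => /(congr1 val) /= /val_inj.
  exact: enum_rank_inj.
case: (@arg_maxnP _ u0 (fun u => injectiveb u) (fun u => #|common_nbhd u|) u0_inj).
move=> u /injectiveP u_inj u_max.
exists u => //; rewrite (bigID [pred u' : {ffun VF -> 'I_n} | injectiveb u']) /=.
apply: leq_add.
- apply: (@leq_trans (\sum_(u' : {ffun VF -> 'I_n} | injectiveb u') #|common_nbhd u|)).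
    exact: leq_sum.
  rewrite sum_nat_cond_const leq_mul2r.
  by rewrite (leq_trans (max_card _)) ?orbT // card_ffun card_ord.
- by rewrite -sum_nat_cond_const; apply: leq_sum => u' _; apply: max_card.
Qed.

Lemma large_common_nbhd D :
  0 < D -> 2 * D ^ f * f * f + f < n -> n * #|T| <= (\sum_t deg t) * D ->
  exists2 u : VF -> 'I_n, injective u & #|T| <= #|common_nbhd u| * (2 * D ^ f).
Proof.
move=> D_gt0 n_large degs.
have le_fn : f <= n by apply: ltnW (leq_ltn_trans (leq_addl _ _) n_large).
have [u u_inj sum_upper] := sum_card_common_nbhd_upper le_fn.
exists u => //.
have sum_lower := sum_card_common_nbhd_lower degs.
have few_noninj := card_noninjective_ffun VF n.
move: sum_lower sum_upper few_noninj n_large.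
set W := \sum_(u' : _) _; set a := n ^ f; set NI := #|_|; set M := #|common_nbhd u|.
set E := D ^ f; set t := #|T| => sum_lower sum_upper few_noninj n_large.
have a_gt0 : 0 < a by rewrite expn_gt0; lia.
have : n * a * t <= n * a * M * E + f * f * a * t * E.
  have := leq_mul (leqnn n) (leq_trans sum_lower (leq_mul sum_upper (leqnn E))).
  have := leq_mul few_noninj (leqnn (t * E)); nia.
have : 2 * (f * f * a * t * E) <= n * a * t.
  have : 2 * E * f * f <= n by lia.
  by move=> /(leq_mul (leqnn (a * t))); nia.
move=> half main.
have : n * a * t <= n * a * (M * (2 * E)) by nia.
by rewrite leq_pmul2l // muln_gt0 a_gt0; lia.
Qed.

End CommonNeighbourhood.

Lemma sum_card_tuple_cons n k (S : {set k.+1.-tuple 'I_n}) :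
  \sum_(t : k.-tuple 'I_n) #|[set x | [tuple of x :: t] \in S]| = #|S|.
Proof.
under eq_bigr do rewrite card_set_sum_nat.
rewrite exchange_big /= pair_bigA /= -card_set_sum_nat.
pose cons_tuple (p : 'I_n * k.-tuple 'I_n) := [tuple of p.1 :: p.2].
rewrite -(on_card_preimset (f := cons_tuple)); first by apply: eq_card => p; rewrite !inE.
exists (fun t => (thead t, [tuple of behead t])) => [[x t] _|t _].
  by congr pair; apply: val_inj.
by rewrite /cons_tuple /= [RHS]tuple_eta.
Qed.

(* [Y] is indexed by [nat] so that the induction on [k] can shift it. *)
Definition box_property (VF : finType) k n D :=
  forall S : {set k.-tuple 'I_n}, n ^ k <= #|S| * D ->
  exists2 Y : nat -> VF -> 'I_n, (forall i, i < k -> injective (Y i)) &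
    forall t : k.-tuple 'I_n, (forall i : 'I_k, tnth t i \in codom (Y i)) -> t \in S.

Lemma erdos_box (VF : finType) k D :
  0 < D -> exists N, forall n, N <= n -> box_property VF k n D.
Proof.
elim: k D => [|k IH] D D_gt0.
  exists 1 => n n_gt0 S; rewrite expn0 => S_gt0.
  exists (fun _ _ => Ordinal n_gt0) => // t _.
  have [s] : exists s, s \in S by apply/card_gt0P; move: S_gt0; case: #|S|.
  by rewrite (tuple0 s) (tuple0 t).
set f := #|VF|.
have [N IHN] := IH (2 * D ^ f) ltac:(by rewrite muln_gt0 expn_gt0 D_gt0).
exists (maxn N (2 * D ^ f * f * f + f).+1) => n.
rewrite geq_max => /andP [le_Nn n_large] S S_large.
pose r x (t : k.-tuple 'I_n) := [tuple of x :: t] \in S.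
have degs : n * #|{: k.-tuple 'I_n}| <= (\sum_t #|[set x | r x t]|) * D.
  by rewrite sum_card_tuple_cons card_tuple card_ord -expnS.
have [u u_inj] := large_common_nbhd D_gt0 n_large degs.
rewrite card_tuple card_ord => /(IHN n le_Nn) [Y Y_inj box_in_nbhd].
exists (fun i => if i is i'.+1 then Y i' else u) => [[|i]|t t_box] //.
  exact: Y_inj.
have /box_in_nbhd : forall i : 'I_k, tnth [tuple of behead t] i \in codom (Y i).
  by move=> i; rewrite tnth_behead; have := t_box (inord i.+1); rewrite inordK ?ltnS.
have /codomP [v t0E] := t_box ord0.
by rewrite inE => /forallP /(_ v); rewrite [t in _ -> t \in _]tuple_eta /thead t0E.
Qed.

Lemma kpartite_edge_transversal k (V : finType) (part : V -> 'I_k) (EF : {set {set V}}) e :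
  kpartite_kgraph part EF -> e \in EF ->
  exists2 w : 'I_k -> V, (forall i, part (w i) = i) & e = [set w i | i : 'I_k].
Proof.
move=> kpartite_EF /kpartite_EF [card_e part_le1].
have part_inj : {in e &, injective part}.
  move=> x y xe ye pxy; have /card_le1_eqP := part_le1 (part x).
  by apply; rewrite inE ?xe ?ye ?pxy eqxx.
have part_onto i : exists x, (x \in e) && (part x == i).
  have : part @: e = setT.
    by apply/eqP; rewrite eqEcard subsetT cardsT card_ord card_in_imset // card_e leqnn.
  by move/setP/(_ i); rewrite inE => /imsetP [x xe ->]; exists x; rewrite xe eqxx.
pose w i := xchoose (part_onto i).
have w_spec i : w i \in e /\ part (w i) = i by case/andP: (xchooseP (part_onto i)) => -> /eqP.
have part_w i : part (w i) = i by case: (w_spec i).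
exists w => //; apply/eqP; rewrite eq_sym eqEcard card_e card_imset; last first.
  by move=> i j /(congr1 part); rewrite !part_w.
by rewrite card_ord leqnn andbT; apply/subsetP => _ /imsetP [i _ ->]; case: (w_spec i).
Qed.

Section TilingOperations.

Variables (k n : nat) (VF : finType) (EF : {set {set VF}}) (E : {set {set hvert k n}}).

Lemma codom_sub_tiling_cover m (phi : 'I_m -> VF -> hvert k n) j :
  codom (phi j) \subset tiling_cover phi.
Proof. by apply/subsetP => _ /codomP [v ->]; apply/bigcupP; exists j => //; apply: imset_f. Qed.

Definition cat_tiling m1 m2 (phi1 : 'I_m1 -> VF -> hvert k n)
    (phi2 : 'I_m2 -> VF -> hvert k n) (l : 'I_(m1 + m2)) : VF -> hvert k n :=
  match split l with inl a => phi1 a | inr b => phi2 b end.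

Variables (m1 m2 : nat) (phi1 : 'I_m1 -> VF -> hvert k n) (phi2 : 'I_m2 -> VF -> hvert k n).

Lemma tiling_cover_cat :
  tiling_cover (cat_tiling phi1 phi2) = tiling_cover phi1 :|: tiling_cover phi2.
Proof.
rewrite /tiling_cover big_split_ord /=.
congr (_ :|: _); apply: eq_bigr => j _;
  by rewrite /cat_tiling ?(unsplitK (inl _)) ?(unsplitK (inr _)).
Qed.

Lemma is_F_tiling_cat :
  is_F_tiling EF E phi1 -> is_F_tiling EF E phi2 ->
  [disjoint tiling_cover phi1 & tiling_cover phi2] ->
  is_F_tiling EF E (cat_tiling phi1 phi2).
Proof.
move=> [inj1 [edge1 disj1]] [inj2 [edge2 disj2]] covers_disj.
rewrite /is_F_tiling /cat_tiling; split; [|split] => [l|l|l l'].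
- by case: split_ordP => j _; [apply: inj1 | apply: inj2].
- by case: split_ordP => j _; [apply: edge1 | apply: edge2].
case: split_ordP => j ->; case: split_ordP => j' -> neq.
- by apply: disj1; apply: contra_neq neq => ->.
- by apply: disjointW covers_disj; apply: codom_sub_tiling_cover.
- by rewrite disjoint_sym; apply: disjointW covers_disj; apply: codom_sub_tiling_cover.
- by apply: disj2; apply: contra_neq neq => ->.
Qed.

End TilingOperations.

Definition uncovered k n (VF : finType) m (phi : 'I_m -> VF -> hvert k n) (i : 'I_k) :
  {set 'I_n} := [set x | (i, x) \notin tiling_cover phi].

Lemma card_part_uncovered k n (VF : finType) m (phi : 'I_m -> VF -> hvert k n) i :
  #|[set v : hvert k n | (v.1 == i) && (v \notin tiling_cover phi)]| = #|uncovered phi i|.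
Proof.
have pair_inj : injective (pair i : 'I_n -> hvert k n) by move=> x y [].
rewrite -(card_imset _ pair_inj); apply: eq_card => -[j x]; rewrite !inE /=.
apply/andP/imsetP => [[/eqP -> unc_x]|[y unc_y [-> ->]]]; first by exists x; rewrite ?inE.
by move: unc_y; rewrite inE eqxx.
Qed.

Section RotationTiling.

Variables (k n : nat) (VF : finType) (partF : VF -> 'I_k.+1) (Y : 'I_k.+1 -> VF -> 'I_n).
Hypothesis Y_inj : forall i, injective (Y i).

(* The copies for b = 0, ..., k together use every vertex Y i v exactly once. *)
Definition rot_tiling (b : 'I_k.+1) (v : VF) : hvert k.+1 n :=
  ((partF v + b)%R, Y (partF v + b)%R v).

Lemma rot_tiling_inj b b' v v' : rot_tiling b v = rot_tiling b' v' -> b = b' /\ v = v'.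
Proof.
move=> rotE; have /= pE := congr1 fst rotE; have /= := congr1 snd rotE.
by rewrite pE => /Y_inj vE; subst v'; split => //; apply: addrI pE.
Qed.

Lemma mem_tiling_cover_rot i x : ((i, x) \in tiling_cover rot_tiling) = (x \in codom (Y i)).
Proof.
apply/bigcupP/codomP => [[b _ /imsetP [v _ [-> ->]]]|[v ->]]; first by exists v.
exists (i - partF v)%R => //; apply/imsetP; exists v => //.
by rewrite /rot_tiling addrC subrK.
Qed.

Lemma is_F_tiling_rot (EF : {set {set VF}}) (E : {set {set hvert k.+1 n}}) :
  kpartite_kgraph partF EF ->
  (forall w : 'I_k.+1 -> VF, [set (i, Y i (w i)) | i : 'I_k.+1] \in E) ->
  is_F_tiling EF E rot_tiling.
Proof.
move=> kpartite_EF box_E; split; [|split].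
- by move=> b v v' /rot_tiling_inj [].
- move=> b e /(kpartite_edge_transversal kpartite_EF) [w part_w ->].
  have -> : rot_tiling b @: [set w i | i : 'I_k.+1]
      = [set (i, Y i (w (i - b)%R)) | i : 'I_k.+1].
    rewrite -imset_comp; apply/setP => z; apply/imsetP/imsetP => [[i _ ->]|[i _ ->]].
    + by exists (i + b)%R => //=; rewrite /rot_tiling part_w addrK.
    + by exists (i - b)%R => //=; rewrite /rot_tiling part_w subrK.
  exact: box_E.
- move=> b b' neq; rewrite disjoint_subset; apply/subsetP => _ /codomP [v ->].
  by rewrite inE; apply/codomP => -[v' /rot_tiling_inj [bE _]]; rewrite bE eqxx in neq.
Qed.

Lemma tiling_extend_rot (EF : {set {set VF}}) (E : {set {set hvert k.+1 n}})
    m (phi : 'I_m -> VF -> hvert k.+1 n) :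
  kpartite_kgraph partF EF -> is_F_tiling EF E phi ->
  (forall w : 'I_k.+1 -> VF, [set (i, Y i (w i)) | i : 'I_k.+1] \in E) ->
  (forall i v, Y i v \in uncovered phi i) ->
  is_F_tiling EF E (cat_tiling phi rot_tiling) /\
  forall i, #|uncovered (cat_tiling phi rot_tiling) i| = #|uncovered phi i| - #|VF|.
Proof.
move=> kpartite_EF tiling_phi box_E Y_unc; split.
  apply: is_F_tiling_cat tiling_phi (is_F_tiling_rot kpartite_EF box_E) _.
  rewrite disjoint_subset; apply/subsetP => -[i x] cov_ix.
  rewrite inE /= mem_tiling_cover_rot; apply/codomP => -[v xE].
  by have := Y_unc i v; rewrite inE -xE cov_ix.
move=> i; have -> : uncovered (cat_tiling phi rot_tiling) i
    = uncovered phi i :\: [set x in codom (Y i)].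
  apply/setP => x.
  by rewrite !inE tiling_cover_cat in_setU negb_or mem_tiling_cover_rot andbC.
rewrite cardsD (setIidPr _) ?cardsE ?card_codom //.
by apply/subsetP => y; rewrite inE => /codomP [v ->]; apply: Y_unc.
Qed.

End RotationTiling.

Local Open Scope ring_scope.

Lemma dense_e_H_lower (R : realType) k n (p omega mu : R) (D : nat)
    (E : {set {set hvert k n}}) (X : 'I_k -> {set 'I_n}) (s : nat) :
  0 <= p -> 0 <= omega ->
  mu * (k ^ k)%:R <= p * omega ^+ k / 2 -> 2 <= p * omega ^+ k * D%:R ->
  dense p mu E -> (forall i, #|X i| = s) -> omega * n%:R <= s%:R ->
  (n ^ k <= e_H E X * D)%N.
Proof.
move=> p_ge0 omega_ge0 mu_small D_large dense_E card_X s_large.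
set c := p * omega ^+ k in mu_small D_large.
set N := n%:R ^+ k : R.
have N_ge0 : 0 <= N by rewrite exprn_ge0.
have main_term : c * N <= p * \prod_(i < k) (#|X i|)%:R.
  rewrite (eq_bigr (fun=> s%:R)) => [|i _]; last by rewrite card_X.
  rewrite prodr_const card_ord -mulrA -exprMn ler_wpM2l // lerXn2r ?nnegrE //.
  by rewrite mulr_ge0.
have error_term : mu * ((k * n)%:R) ^+ k <= c / 2 * N.
  by rewrite natrM exprMn -natrX mulrA ler_wpM2r.
have e_lower : c / 2 * N <= (e_H E X)%:R.
  by apply: le_trans (dense_E X); lra.
rewrite -(ler_nat R) natrM natrX -/N.
have := ler_wpM2r (ler0n R D) e_lower.
have := ler_wpM2l N_ge0 D_large.
nra.
Qed.

Section GreedyStep.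

Variables (R : realType) (k : nat) (p omega mu : R) (D n : nat).
Variables (VF : finType) (partF : VF -> 'I_k.+1) (EF : {set {set VF}}).
Variable E : {set {set hvert k.+1 n}}.
Hypotheses (p_ge0 : 0 <= p) (omega_ge0 : 0 <= omega).
Hypothesis mu_small : mu * (k.+1 ^ k.+1)%:R <= p * omega ^+ k.+1 / 2.
Hypothesis D_large : 2 <= p * omega ^+ k.+1 * D%:R.
Hypothesis box : box_property VF k.+1 n D.
Hypotheses (kpartite_EF : kpartite_kgraph partF EF) (dense_E : dense p mu E).

Definition balanced_tiling (s : nat) := exists m (phi : 'I_m -> VF -> hvert k.+1 n),
  is_F_tiling EF E phi /\ forall i, #|uncovered phi i| = s.

Lemma balanced_tiling_step s :
  balanced_tiling s -> omega * n%:R <= s%:R -> balanced_tiling (s - #|VF|).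
Proof.
case=> m [phi [tiling_phi card_unc]] s_large.
pose tuple_of (t : {ffun 'I_k.+1 -> 'I_n}) := [tuple t i | i < k.+1].
have tuple_of_inj : injective tuple_of.
  move=> t t' tE; apply/ffunP => i.
  by have := congr1 (fun u => tnth u i) tE; rewrite !tnth_mktuple.
pose S := tuple_of @: [set t : {ffun 'I_k.+1 -> 'I_n} |
  [forall i, t i \in uncovered phi i] && ([set (i, t i) | i : 'I_k.+1] \in E)].
have := dense_e_H_lower p_ge0 omega_ge0 mu_small D_large dense_E card_unc s_large.
rewrite /e_H -(card_imset _ tuple_of_inj) => /box [Y Y_inj box_S].
pose Z (i : 'I_k.+1) := Y i.
have box_edge (w : 'I_k.+1 -> VF) : [forall i, Z i (w i) \in uncovered phi i]
    && ([set (i, Z i (w i)) | i : 'I_k.+1] \in E).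
  have : tuple_of [ffun i => Z i (w i)] \in S.
    by apply: box_S => i; rewrite tnth_mktuple ffunE codom_f.
  rewrite mem_imset // inE; under eq_forallb do rewrite ffunE.
  by under eq_imset do rewrite ffunE.
have [tiling' card_unc'] := tiling_extend_rot (fun i => Y_inj i (ltn_ord i))
  kpartite_EF tiling_phi (fun w => proj2 (andP (box_edge w)))
  (fun i v => forallP (proj1 (andP (box_edge (fun=> v)))) i).
exists (m + k.+1)%N, (cat_tiling phi (rot_tiling partF Z)).
by split => // i; rewrite card_unc' card_unc.
Qed.

End GreedyStep.

Lemma balanced_tiling_full (k n : nat) (VF : finType) (EF : {set {set VF}})
    (E : {set {set hvert k.+1 n}}) :
  balanced_tiling EF E n.
Proof.
exists 0%N, (ffun0 (card_ord 0)); split; first by split; [|split] => -[].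
move=> i; rewrite -[RHS](card_ord n); apply: eq_card => x.
by rewrite /uncovered /tiling_cover big_ord0 !inE.
Qed.

Lemma nat_descent (Q : nat -> Prop) (P : pred nat) (f s : nat) :
  (0 < f)%N -> ~~ P 0%N -> (forall s, Q s -> P s -> Q (s - f)%N) -> Q s ->
  exists2 s', Q s' & ~~ P s'.
Proof.
move=> f_gt0 not_P0 step; elim/ltn_ind: s => s IH Qs.
have [Ps|] := boolP (P s); last by exists s.
apply: IH (step s Qs Ps); rewrite ltn_subrL f_gt0 lt0n.
by apply: contraNneq not_P0 => s0; rewrite -s0.
Qed.

Unset Implicit Arguments.

Theorem lemma5p1 (R : realType) (k f : nat) (p omega : R)
  (VF : finType) (partF : VF -> 'I_k) (EF : {set {set VF}}) :
  (2 <= k)%N -> (1 <= f)%N -> 0 < p < 1 -> 0 < omega < 1 ->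
  #|VF| = f -> kpartite_kgraph partF EF ->
  exists mu0 : R, 0 < mu0 /\ exists n0 : nat,
    forall (mu : R) (n : nat), 0 < mu <= mu0 -> (n0 <= n)%N ->
    forall E : {set {set hvert k n}},
      kpartite_kgraph (fun v : hvert k n => v.1) E -> dense p mu E ->
      exists (m : nat) (phi : 'I_m -> VF -> hvert k n),
        is_F_tiling EF E phi /\
        forall i : 'I_k,
          (#|[set v : hvert k n | (v.1 == i) && (v \notin tiling_cover phi)]|)%:R
            <= omega * n%:R.
Proof.
case: k partF => [|[|k]] // partF _ f_gt0 /andP [p_gt0 _] /andP [omega_gt0 _].
move=> card_VF kpartite_EF; subst f.
set c := p * omega ^+ k.+2.
have c_gt0 : 0 < c by rewrite mulr_gt0 // exprn_gt0.
pose D := Num.Def.archi_bound (2 / c).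
have D_large : 2 <= c * D%:R.
  have := archi_boundP (ltW (divr_gt0 (ltr0Sn _ 1) c_gt0)); rewrite -/D ltr_pdivrMr // mulrC.
  exact: ltW.
have D_gt0 : (0 < D)%N.
  by rewrite lt0n; apply: contraTneq D_large => ->; rewrite mulr0 -ltNge ltr0n.
have [N box_N] := erdos_box VF k.+2 D_gt0.
have kk_gt0 : 0 < (k.+2 ^ k.+2)%:R :> R by rewrite ltr0n expn_gt0.
exists (c / 2 / (k.+2 ^ k.+2)%:R); split; first by rewrite !divr_gt0.
exists N => mu n /andP [_ mu_le] le_Nn E _ dense_E.
have mu_small : mu * (k.+2 ^ k.+2)%:R <= c / 2 by rewrite -ler_pdivlMr.
have step := balanced_tiling_step (ltW p_gt0) (ltW omega_gt0) mu_small D_large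
  (box_N n le_Nn) kpartite_EF dense_E.
have [s [m [phi [tiling_phi card_unc]]]] := nat_descent
  (P := fun s => omega * n%:R < s%:R) f_gt0 ltac:(by rewrite -leNgt mulr_ge0 // ltW)
  (fun s tiling_s s_large => step s tiling_s (ltW s_large)) (balanced_tiling_full EF E).
rewrite -leNgt => s_small.
by exists m, phi; split => // i; rewrite card_part_uncovered card_unc.
Qed.
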